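(* In every execution of the Minimmit protocol (described in the context), correct processors vote for at most one block in each view: if $p_i$ is correct then, for each $v\in \mathbb{N}_{\geq 1}$, there exists at most one block $b$ with $b.\text{view}=v$ such that $p_i$ sends a message $(\text{vote},b)$.
   Context: Setting. There are $n$ processors $\Pi=\{p_0,\dots,p_{n-1}\}$ and an integer $f$ with $5f+1\le n$. At most $f$ processors may be corrupted by an adversary during the execution and then behave arbitrarily (Byzantine); processors never corrupted are called correct. Processors communicate over point-to-point authenticated channels; every message is signed by its sender; a PKI validates signatures and $H$ is a collision-resistant hash function; attention is restricted to executions in which the adversary cannot forge signatures or find hash collisions. Time is divided into timeslots $t\in\mathbb{N}_{\ge 0}$ (partial synchrony): a message sent at time $t$ arrives at some time $t'>t$ with $t'\le \max\{\text{GST},t\}+\Delta$, where $\Delta$ is known to the protocol and GST is unknown and chosen by the adversary (who also chooses delivery times subject to this constraint). Clocks of correct processors advance in real time. When a correct processor sends a message to all processors, it regards that message as immediately received by itself. Transactions are unique messages signed by the environment; each timeslot each processor may receive a finite set of transactions. Each processor $p_i$ maintains an append-only log $\text{log}_i$ of distinct transactions, $\text{log}_i(t)$ denoting its value at the end of timeslot $t$. Blocks. $\text{lead}(v):=p_j$ with $j=v \bmod n$. The genesis block is $b_{\text{gen}}=(0,\lambda,\lambda)$ ($\lambda$ the empty sequence). Any other block is a tuple $b=(v,\text{Tr},h)$ signed by $\text{lead}(v)$, with $v\in\mathbb{N}_{\ge1}$ ($b.\text{view}=v$, ''a view $v$ block''), $\text{Tr}=b.\text{Tr}$ a sequence of distinct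 transactions, and $h=b.h$ a hash value; its parent is the block $b'$ with $H(b')=h$. The ancestors of $b$ are $b$ and the ancestors of its parent ($b_{\text{gen}}$ has only itself). Two blocks are inconsistent if neither is an ancestor of the other. To finalise $b$ means: upon obtaining all ancestors of $b$, the processor sets its log to extend the concatenation of $b'.\text{Tr}$ over ancestors $b'$ of $b$ (with duplicates removed). Messages. A vote for $b$ is $(\text{vote},b)$. An M-notarization for $b$ is a set of $2f+1$ votes for $b$ signed by distinct processors; an L-notarization for $b$ is a set of $n-f$ votes for $b$ signed by distinct processors. A nullify$(v)$ message is $(\text{nullify},v)$; a nullification for view $v$ is a set of $2f+1$ nullify$(v)$ messages signed by distinct processors. Local state of each processor: $\mathtt{S}$, the set of all received messages (automatically updated; it contains a block $b$ if it contains any message having $b$ as an entry; initially it contains only $b_{\text{gen}}$ and an M- and L-notarization for $b_{\text{gen}}$); the current view $\mathtt{v}$ (initially 1; a processor enters view $v$ when $\mathtt{v}$ becomes $v$); a timer $\mathtt{T}$ (initially 0, increasing in real time, reset to 0 upon entering a new view); $\mathtt{nullified}$ (initially false) and $\mathtt{notarized}$ (initially $\bot$, a value different from every block). SelectParent$(\mathtt{S},\mathtt{v})$: let $v'<\mathtt{v}$ be greatest such that $\mathtt{S}$ contains an M-notarization for some block of view $v'$; output the lexicographically least such block. ProposeChild$(b,v)$: form a sequence Tr of distinct transactions containing all transactions received and not in $b'.\text{Tr}$ for any ancestor $b'\in\mathtt{S}$ of $b$, and send the block $(v,\text{Tr},H(b))$ to all processors. $\mathtt{S}$ contains a valid proposal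 $b$ for view $v$ if $\mathtt{S}$ contains (i) precisely one block of the form $b=(v,\text{Tr},h)$ signed by $\text{lead}(v)$, (ii) an M-notarization for some $b'$ with $H(b')=h$, say $b'.\text{view}=v'$, and (iii) a nullification for each view in the open interval $(v',v)$. At timeslot $t$ a nullification $N\subseteq\mathtt{S}$ for a view $v$ is new if $\mathtt{S}$ contained no nullification for $v$ at any earlier timeslot and $N$ is lexicographically least among nullifications for $v$ in $\mathtt{S}$; new M-notarizations and new L-notarizations for a block $b$ are defined analogously. Protocol (Minimmit): at every timeslot, correct $p_i$ does, in order: (1) send new nullifications in $\mathtt{S}$ to all processors; (2) send new M- and L-notarizations in $\mathtt{S}$ to all; (3) if $p_i=\text{lead}(\mathtt{v})$, execute ProposeChild(SelectParent$(\mathtt{S},\mathtt{v}),\mathtt{v})$; (4) if $\mathtt{S}$ contains a valid proposal $b$ for view $\mathtt{v}$ and $\mathtt{notarized}=\bot$ and $\mathtt{nullified}=$ false, set $\mathtt{notarized}:=b$ and send $(\text{vote},b)$ to all; (5) if $\mathtt{T}=2\Delta$, $\mathtt{nullified}=$ false and $\mathtt{notarized}=\bot$, set $\mathtt{nullified}:=$ true and send $(\text{nullify},\mathtt{v})$ to all; (6) if $\mathtt{S}$ contains a nullification for $\mathtt{v}$, set $\mathtt{v}:=\mathtt{v}+1$, $\mathtt{nullified}:=$ false, $\mathtt{notarized}:=\bot$; (7) if $\mathtt{S}$ contains an M-notarization for some $b$ with $b.\text{view}=\mathtt{v}$: if $\mathtt{notarized}=\bot$ and $\mathtt{nullified}=$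 false send $(\text{vote},b)$ to all; then set $\mathtt{v}:=\mathtt{v}+1$, $\mathtt{nullified}:=$ false, $\mathtt{notarized}:=\bot$; (8) if $\mathtt{nullified}=$ false, $\mathtt{notarized}\neq\bot$, and $\mathtt{S}$ contains at least $2f+1$ messages signed by distinct processors, each either $(\text{nullify},\mathtt{v})$ or $(\text{vote},b)$ for some $b$ with $b.\text{view}=\mathtt{v}$ and $b\ne\mathtt{notarized}$, then set $\mathtt{nullified}:=$ true and send $(\text{nullify},\mathtt{v})$ to all; (9) if $\mathtt{S}$ contains a new L-notarization for a block $b$, finalise $b$. *)

From mathcomp Require Import all_boot.
From Stdlib Require List.

Set Implicit Arguments.
Unset Strict Implicit.
Unset Printing Implicit Defensive.

Definition block (Tx Hash : Type) : Type := (nat * list Tx * Hash)%type.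
Definition bview {Tx Hash : Type} (b : block Tx Hash) : nat := b.1.1.
Definition btr {Tx Hash : Type} (b : block Tx Hash) : list Tx := b.1.2.
Definition bh {Tx Hash : Type} (b : block Tx Hash) : Hash := b.2.

(* Signed messages.  A block is intrinsically signed by lead(b.view);
   (vote,b) and (nullify,v) carry the signer. *)
Inductive smsg (n : nat) (Tx Hash : Type) : Type :=
| SBlock of block Tx Hash
| SVote of 'I_n & block Tx Hash
| SNull of 'I_n & nat.
Arguments SBlock {n Tx Hash} _.
Arguments SVote {n Tx Hash} _ _.
Arguments SNull {n Tx Hash} _ _.

(* A packet is what is sent in one send event: a single signed message,
   or an aggregate (notarization / nullification = set of signed messages). *)
Definition packet n Tx Hash := list (smsg n Tx Hash).

(* Local protocol state of a processor (besides S). *)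
Record lstate (Tx Hash : Type) := LS {
  lview : nat;
  lentry : nat;                      (* timeslot at which the current view was entered (T = t - lentry) *)
  lnull : bool;
  lnot : option (block Tx Hash)      (* notarized ; None = bottom *)
}.
Arguments LS {Tx Hash} _ _ _ _.

Record exec (n : nat) (Tx Hash : Type) := Exec {
  Corr : {set 'I_n};
  GST : nat;
  st : 'I_n -> nat -> lstate Tx Hash;                  (* state at the start of timeslot t *)
  outs : 'I_n -> nat -> packet n Tx Hash -> Prop;      (* packets sent (to all) by a correct processor at t *)
  sends : 'I_n -> 'I_n -> nat -> packet n Tx Hash -> Prop; (* sends p q t m : p sends m to q at t *)
  del : 'I_n -> 'I_n -> nat -> packet n Tx Hash -> nat;
  txin : 'I_n -> nat -> list Tx
}.

Section Minimmit.
Variables (n f Delta : nat) (Tx Hash : Type).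
Variable H : block Tx Hash -> Hash.
Variable hlam : Hash.   (* the empty sequence lambda used as hash field of the genesis block *)

Notation block := (block Tx Hash).
Notation smsg := (smsg n Tx Hash).
Notation packet := (packet n Tx Hash).
Notation lstate := (lstate Tx Hash).

Definition bgen : block := (0, nil, hlam).

Definition isLead (p : 'I_n) (v : nat) : bool := nat_of_ord p == v %% n.

Definition signer (x : smsg) : option 'I_n :=
  match x with SBlock _ => None | SVote p _ => Some p | SNull p _ => Some p end.

Definition blockOf (x : smsg) : option block :=
  match x with SBlock b => Some b | SVote _ b => Some b | SNull _ _ => None end.

Definition mset := smsg -> Prop.

Definition blkIn (S : mset) (b : block) : Prop :=
  b = bgen \/ S (SBlock b) \/ exists p, S (SVote p b).

(* S contains an M-notarization / L-notarization for b (the initial S contains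
   one for the genesis block) *)
Definition hasMNot (S : mset) (b : block) : Prop :=
  b = bgen \/ exists P : {set 'I_n}, #|P| = (2 * f + 1)%N /\ forall p, p \in P -> S (SVote p b).
Definition hasLNot (S : mset) (b : block) : Prop :=
  b = bgen \/ exists P : {set 'I_n}, #|P| = (n - f)%N /\ forall p, p \in P -> S (SVote p b).
Definition hasNull (S : mset) (v : nat) : Prop :=
  exists P : {set 'I_n}, #|P| = (2 * f + 1)%N /\ forall p, p \in P -> S (SNull p v).

Definition isVotes (k : nat) (b : block) (m : packet) : Prop :=
  List.NoDup m /\ size m = k /\ forall x, List.In x m -> exists p, x = SVote p b.
Definition isNullif (v : nat) (m : packet) : Prop :=
  List.NoDup m /\ size m = (2 * f + 1)%N /\ forall x, List.In x m -> exists p, x = SNull p v.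

Definition inclS (m : packet) (S : mset) : Prop := forall x, List.In x m -> S x.

Inductive anc (S : mset) : block -> block -> Prop :=
| anc_refl b : anc S b b
| anc_step b p b' : b <> bgen -> blkIn S p -> H p = bh b -> anc S p b' -> anc S b b'.

(* SelectParent (ties among blocks of the greatest view are resolved arbitrarily) *)
Definition selectParent (S : mset) (v : nat) (bp : block) : Prop :=
  bview bp < v /\ hasMNot S bp /\
  forall b, hasMNot S b -> bview b < v -> bview b <= bview bp.

Definition validProp (S : mset) (v : nat) (b : block) : Prop :=
  [/\ blkIn S b, bview b = v,
      (forall b', blkIn S b' -> bview b' = v -> b' = b) &
      exists b', [/\ hasMNot S b', H b' = bh b &
                     forall w, bview b' < w -> w < v -> hasNull S w]].

Definition noPk : packet -> Prop := fun _ => False.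
Definition onePk (m : packet) : packet -> Prop := fun m' => m' = m.
Definition unionPk (O1 O2 : packet -> Prop) : packet -> Prop := fun m => O1 m \/ O2 m.
Definition addS (S : mset) (O : packet -> Prop) : mset :=
  fun x => S x \/ exists m, O m /\ List.In x m.

Definition step1 (Sprev S : mset) (O : packet -> Prop) : Prop :=
  (forall m, O m -> exists v, [/\ hasNull S v, ~ hasNull Sprev v, isNullif v m & inclS m S]) /\
  (forall v, hasNull S v -> ~ hasNull Sprev v -> exists m, O m /\ isNullif v m).

Definition step2 (Sprev S : mset) (O : packet -> Prop) : Prop :=
  (forall m, O m -> exists b,
      ([/\ hasMNot S b, ~ hasMNot Sprev b, isVotes (2 * f + 1) b m & inclS m S]) \/
      ([/\ hasLNot S b, ~ hasLNot Sprev b, isVotes (n - f) b m & inclS m S])) /\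
  (forall b, hasMNot S b -> ~ hasMNot Sprev b -> exists m, O m /\ isVotes (2 * f + 1) b m) /\
  (forall b, hasLNot S b -> ~ hasLNot Sprev b -> exists m, O m /\ isVotes (n - f) b m).

Definition step3 (i : 'I_n) (S : mset) (txs : list Tx) (s : lstate) (O : packet -> Prop) : Prop :=
  if isLead i (lview s) then
    exists bp Tr, [/\ selectParent S (lview s) bp, List.NoDup Tr,
      (forall tx, List.In tx txs -> (forall a, anc S bp a -> ~ List.In tx (btr a)) -> List.In tx Tr) &
      O = onePk [:: SBlock (lview s, Tr, H bp)]]
  else O = noPk.

Definition step4 (i : 'I_n) (S : mset) (s : lstate) (O : packet -> Prop) (s' : lstate) : Prop :=
  (exists b, [/\ validProp S (lview s) b, lnot s = None, lnull s = false,
                 s' = LS (lview s) (lentry s) (lnull s) (Some b) & O = onePk [:: SVote i b]]) \/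
  ((~ (exists b, validProp S (lview s) b) \/ lnot s <> None \/ lnull s = true) /\ s' = s /\ O = noPk).

Definition step5 (i : 'I_n) (t : nat) (s : lstate) (O : packet -> Prop) (s' : lstate) : Prop :=
  let C := [/\ t - lentry s = (2 * Delta)%N, lnull s = false & lnot s = None] in
  (C /\ s' = LS (lview s) (lentry s) true (lnot s) /\ O = onePk [:: SNull i (lview s)]) \/
  (~ C /\ s' = s /\ O = noPk).

Definition step6 (t : nat) (S : mset) (s s' : lstate) : Prop :=
  (hasNull S (lview s) /\ s' = LS (lview s).+1 t false None) \/
  (~ hasNull S (lview s) /\ s' = s).

Definition step7 (i : 'I_n) (t : nat) (S : mset) (s : lstate) (O : packet -> Prop) (s' : lstate) : Prop :=
  (exists b, [/\ bview b = lview s, hasMNot S b,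
     (if (if lnot s is None then ~~ lnull s else false) then O = onePk [:: SVote i b] else O = noPk) &
     s' = LS (lview s).+1 t false None]) \/
  ((~ exists b, bview b = lview s /\ hasMNot S b) /\ s' = s /\ O = noPk).

Definition step8 (i : 'I_n) (S : mset) (s : lstate) (O : packet -> Prop) (s' : lstate) : Prop :=
  let C := lnull s = false /\ exists bn, lnot s = Some bn /\
     exists P : {set 'I_n}, #|P| = (2 * f + 1)%N /\ forall p, p \in P ->
        S (SNull p (lview s)) \/ exists b, [/\ bview b = lview s, b <> bn & S (SVote p b)] in
  (C /\ s' = LS (lview s) (lentry s) true (lnot s) /\ O = onePk [:: SNull i (lview s)]) \/
  (~ C /\ s' = s /\ O = noPk).

(* One timeslot of a correct processor i (step (9), finalisation, only affects the
   log and is therefore not modelled).  S0: received messages at the start of the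
   timeslot; Sprev: the value of S at the end of the previous timeslot;
   own messages are regarded as received immediately. *)
Definition slot (i : 'I_n) (t : nat) (Sprev S0 : mset) (txs : list Tx)
    (s0 : lstate) (O : packet -> Prop) (s8 : lstate) : Prop :=
  exists (O1 O2 O3 O4 O5 O7 O8 : packet -> Prop) (s4 s5 s6 s7 : lstate),
    let S1 := addS S0 O1 in
    let S2 := addS S1 O2 in
    let S3 := addS S2 O3 in
    let S4 := addS S3 O4 in
    let S5 := addS S4 O5 in
    let S7 := addS S5 O7 in
    step1 Sprev S0 O1 /\ step2 Sprev S1 O2 /\ step3 i S2 txs s0 O3 /\
        step4 i S3 s0 O4 s4 /\ step5 i t s4 O5 s5 /\ step6 t S5 s5 s6 /\
        step7 i t S5 s6 O7 s7 /\ step8 i S7 s7 O8 s8 /\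
        O = unionPk O1 (unionPk O2 (unionPk O3 (unionPk O4 (unionPk O5 (unionPk O7 O8))))).

Definition init_state : lstate := LS 1 0 false None.

Section Exec.
Variable E : exec n Tx Hash.

Definition delivered (i : 'I_n) (t : nat) : mset :=
  fun x => exists p t' m, [/\ sends E p i t' m, del E p i t' m <= t & List.In x m].
Definition ownBefore (i : 'I_n) (t : nat) : mset :=
  fun x => exists t' m, [/\ t' < t, outs E i t' m & List.In x m].
(* S at the start of timeslot t (before the steps) *)
Definition Sstart (i : 'I_n) (t : nat) : mset :=
  fun x => delivered i t x \/ ownBefore i t x.
(* S at the end of timeslot t *)
Definition Send (i : 'I_n) (t : nat) : mset :=
  fun x => delivered i t x \/ ownBefore i t.+1 x.
Definition Sprev (i : 'I_n) (t : nat) : mset :=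
  match t with 0 => (fun _ => False) | t'.+1 => Send i t' end.
Definition txsUpTo (i : 'I_n) (t : nat) : list Tx := flatten [seq txin E i u | u <- iota 0 t.+1].

Definition emitted (p : 'I_n) (t : nat) (x : smsg) : Prop :=
  exists t' m, [/\ t' <= t, outs E p t' m & List.In x m].

Definition is_exec : Prop :=
  #|~: Corr E| <= f /\
      (forall i, i \in Corr E -> st E i 0 = init_state) /\
      (forall i t, i \in Corr E ->
         slot i t (Sprev i t) (Sstart i t) (txsUpTo i t) (st E i t) (outs E i t) (st E i t.+1)) /\
      (forall i q t m, i \in Corr E -> (sends E i q t m <-> outs E i t m)) /\
      (* partial synchrony *)
      (forall p q t m, sends E p q t m -> t < del E p q t m <= maxn (GST E) t + Delta) /\
      (* unforgeable signatures: *)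
      (forall p q t m x r, sends E p q t m -> List.In x m -> signer x = Some r ->
         r \in Corr E -> emitted r t x) /\
      (forall p q t m x b, sends E p q t m -> List.In x m -> blockOf x = Some b ->
         b = bgen \/ (0 < bview b /\ forall r, isLead r (bview b) -> r \in Corr E ->
                                     emitted r t (SBlock b))) /\
      (forall p1 q1 t1 m1 x1 b1 p2 q2 t2 m2 x2 b2,
         sends E p1 q1 t1 m1 -> List.In x1 m1 -> blockOf x1 = Some b1 ->
         sends E p2 q2 t2 m2 -> List.In x2 m2 -> blockOf x2 = Some b2 ->
         H b1 = H b2 -> b1 = b2).
End Exec.
End Minimmit.

(* Only steps (4) and (7) make a correct processor cast a vote of its own, and
   each does so only for its current view v and only while notarized = ⊥.
   Call v locked in a state when the processor has left v, or is in v with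
   notarized ≠ ⊥.  Locks are never released, and casting a vote for v locks v.
   By induction over timeslots, every view in which the processor has voted is
   locked, so a second vote in the same view is impossible.  Own votes that
   come back, relayed inside notarizations or from the network (signatures are
   unforgeable), were cast in an earlier timeslot. *)
From mathcomp Require Import all_boot.
From mathcomp Require Import zify.

Set Implicit Arguments.
Unset Strict Implicit.
Unset Printing Implicit Defensive.

Section VoteLocks.

Variables (n f Delta : nat) (Tx Hash : Type).
Variables (H : block Tx Hash -> Hash) (hlam : Hash).

Notation block := (block Tx Hash).
Notation lstate := (lstate Tx Hash).
Notation packet := (packet n Tx Hash).

Definition view_locked (v : nat) (s : lstate) : Prop :=
  v < lview s \/ (lview s = v /\ lnot s <> None).

Definition lock_mono (s s' : lstate) : Prop :=
  forall v, view_locked v s -> view_locked v s'.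

Definition votes_in (i : 'I_n) (O : packet -> Prop) (b : block) : Prop :=
  exists m, O m /\ List.In (SVote i b) m.

Definition vote_inv (V : block -> Prop) (s : lstate) : Prop :=
  (forall b, V b -> view_locked (bview b) s) /\
  (forall b1 b2, V b1 -> V b2 -> bview b1 = bview b2 -> b1 = b2).

Lemma view_locked_next (v t : nat) (s : lstate) :
  v <= lview s -> view_locked v (LS (lview s).+1 t false None).
Proof. by move=> le_v; left; rewrite /= ltnS. Qed.

Lemma lock_mono_next (t : nat) (s : lstate) :
  lock_mono s (LS (lview s).+1 t false None).
Proof. by move=> v [lt_v | [<- _]]; apply: view_locked_next => //; apply: ltnW. Qed.

Lemma lock_mono_notarize (s : lstate) (b : block) :
  lock_mono s (LS (lview s) (lentry s) (lnull s) (Some b)).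
Proof. by move=> v [lt_v | [eq_v _]]; [left | right]. Qed.

Lemma vote_inv_sub (V V' : block -> Prop) (s : lstate) :
  (forall b, V' b -> V b) -> vote_inv V s -> vote_inv V' s.
Proof. by move=> sub [locked uniq]; split=> [b /sub | b1 b2 /sub V1 /sub V2]; auto. Qed.

Lemma vote_inv_mono (V : block -> Prop) (s s' : lstate) :
  lock_mono s s' -> vote_inv V s -> vote_inv V s'.
Proof. by move=> mono [locked uniq]; split=> // b /locked /mono. Qed.

Lemma votes_in_noPk (i : 'I_n) (b : block) : ~ votes_in i (@noPk n Tx Hash) b.
Proof. by case=> m []. Qed.

Lemma votes_in_onePk (i : 'I_n) (x : smsg n Tx Hash) (b : block) :
  votes_in i (onePk [:: x]) b -> x = SVote i b.
Proof. by case=> _ [-> [|[]]]. Qed.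

Lemma votes_in_unionPk (i : 'I_n) (O1 O2 : packet -> Prop) (b : block) :
  votes_in i (unionPk O1 O2) b -> votes_in i O1 b \/ votes_in i O2 b.
Proof. by case=> m [[O1m | O2m] inm]; [left | right]; exists m. Qed.

Lemma vote_inv_silent (i : 'I_n) (V : block -> Prop) (s s' : lstate) :
  lock_mono s s' -> vote_inv V s ->
  vote_inv (fun b => V b \/ votes_in i (@noPk n Tx Hash) b) s'.
Proof.
move=> mono /(vote_inv_mono mono); apply: vote_inv_sub => b [] // /votes_in_noPk [].
Qed.

Lemma vote_inv_cast (i : 'I_n) (V : block -> Prop) (s s' : lstate) (b : block) :
  lview s = bview b -> lnot s = None -> lock_mono s s' -> view_locked (bview b) s' ->
  vote_inv V s -> vote_inv (fun b' => V b' \/ votes_in i (onePk [:: SVote i b]) b') s'.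
Proof.
move=> view_b free mono locked_b [locked uniq].
have other_view b' : V b' -> bview b' <> bview b.
  move=> /locked [lt_b' | [_ []]] // eq_b'.
  by move: lt_b'; rewrite eq_b' -view_b ltnn.
have new_vote b' : votes_in i (onePk [:: SVote i b]) b' -> b' = b.
  by move=> /votes_in_onePk [].
split=> [b' [/locked /mono // | /new_vote -> //] | b1 b2].
case=> [V1 | /new_vote ->]; case=> [V2 | /new_vote ->] //; first exact: uniq.
- by move=> /(other_view _ V1).
- by move=> /esym /(other_view _ V2).
Qed.

Section Steps.

Variable i : 'I_n.

Lemma step4_vote_inv (S : mset n Tx Hash) (s s' : lstate) O V :
  step4 f H hlam i S s O s' -> vote_inv V s ->
  vote_inv (fun b => V b \/ votes_in i O b) s'.
Proof.
case=> [[b [[_ view_b _ _] free _ -> ->]] | [_ [-> ->]]].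
- by apply: vote_inv_cast => //; [exact: lock_mono_notarize | right].
- exact: vote_inv_silent.
Qed.

Lemma step5_lock_mono t (s s' : lstate) O :
  step5 Delta i t s O s' -> lock_mono s s'.
Proof. by case=> [[_ [-> _]] | [_ [-> _]]]. Qed.

Lemma step6_lock_mono t (S : mset n Tx Hash) (s s' : lstate) :
  step6 f t S s s' -> lock_mono s s'.
Proof. by case=> [[_ ->] | [_ ->]] //; exact: lock_mono_next. Qed.

Lemma step7_vote_inv t (S : mset n Tx Hash) (s s' : lstate) O V :
  step7 f hlam i t S s O s' -> vote_inv V s ->
  vote_inv (fun b => V b \/ votes_in i O b) s'.
Proof.
case=> [[b [view_b _ out ->]] | [_ [-> ->]]]; last exact: vote_inv_silent.
have mono : lock_mono s (LS (lview s).+1 t false None) by exact: lock_mono_next.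
move: out; case free: (lnot s) => [bn|]; case: (lnull s) => /= ->;
  try exact: vote_inv_silent.
by apply: vote_inv_cast => //; apply: view_locked_next; rewrite view_b.
Qed.

Lemma step8_lock_mono (S : mset n Tx Hash) (s s' : lstate) O :
  step8 f i S s O s' -> lock_mono s s'.
Proof. by case=> [[_ [-> _]] | [_ [-> _]]]. Qed.

Lemma isNullif_no_vote v (m : packet) (b : block) :
  isNullif f v m -> ~ List.In (SVote i b) m.
Proof. by case=> _ [_ null] /null [p]. Qed.

Lemma step1_no_votes Sp (S : mset n Tx Hash) O b :
  step1 f Sp S O -> ~ votes_in i O b.
Proof.
by case=> out _ [m [/out [v [_ _ null _]] inm]]; exact: isNullif_no_vote null inm.
Qed.

(* Notarizations relay votes already received, and step (1) adds none. *)
Lemma step2_votes Sp (S0 : mset n Tx Hash) O1 O2 b :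
  step1 f Sp S0 O1 -> step2 f hlam Sp (addS S0 O1) O2 -> votes_in i O2 b ->
  S0 (SVote i b).
Proof.
move=> step1O1 [out _] [m [/out [b' [[_ _ _ incl] | [_ _ _ incl]]] /incl]];
  case=> [// | [m1 [O1m1 inm1]]]; by case: (step1_no_votes (b := b) step1O1); exists m1.
Qed.

Lemma step3_no_votes (S : mset n Tx Hash) txs (s : lstate) O b :
  step3 f H hlam i S txs s O -> ~ votes_in i O b.
Proof.
rewrite /step3; case: isLead => [[bp [Tr [_ _ _ ->]]] | ->];
  [by move=> /votes_in_onePk | exact: votes_in_noPk].
Qed.

Lemma step5_no_votes t (s s' : lstate) O b :
  step5 Delta i t s O s' -> ~ votes_in i O b.
Proof. by case=> [[_ [_ ->]] /votes_in_onePk | [_ [_ ->]] /votes_in_noPk]. Qed.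

Lemma step8_no_votes (S : mset n Tx Hash) (s s' : lstate) O b :
  step8 f i S s O s' -> ~ votes_in i O b.
Proof. by case=> [[_ [_ ->]] /votes_in_onePk | [_ [_ ->]] /votes_in_noPk]. Qed.

Lemma slot_vote_inv t Sp (S0 : mset n Tx Hash) txs (s0 s8 : lstate) O V :
  (forall b, S0 (SVote i b) -> V b) ->
  slot f Delta H hlam i t Sp S0 txs s0 O s8 -> vote_inv V s0 ->
  vote_inv (fun b => V b \/ votes_in i O b) s8.
Proof.
move=> own_old [O1 [O2 [O3 [O4 [O5 [O7 [O8 [s4 [s5 [s6 [s7]]]]]]]]]]] /=.
move=> [h1 [h2 [h3 [h4 [h5 [h6 [h7 [h8 ->]]]]]]]] inv0.
have inv4 := step4_vote_inv h4 inv0.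
have inv6 := vote_inv_mono (step6_lock_mono h6) (vote_inv_mono (step5_lock_mono h5) inv4).
have inv8 := vote_inv_mono (step8_lock_mono h8) (step7_vote_inv h7 inv6).
apply: vote_inv_sub inv8 => b [Vb | ]; first by left; left.
case/votes_in_unionPk => [/(step1_no_votes h1) [] |].
case/votes_in_unionPk => [/(step2_votes h1 h2) /own_old Vb | ]; first by left; left.
case/votes_in_unionPk => [/(step3_no_votes h3) [] |].
case/votes_in_unionPk => [O4b | ]; first by left; right.
case/votes_in_unionPk => [/(step5_no_votes h5) [] |].
case/votes_in_unionPk => [O7b | /(step8_no_votes h8) []]; by right.
Qed.

End Steps.

End VoteLocks.

Section Execution.

Variables (n f Delta : nat) (Tx Hash : Type).
Variables (H : block Tx Hash -> Hash) (hlam : Hash) (E : exec n Tx Hash).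
Hypothesis exec_E : is_exec f Delta H hlam E.
Variable i : 'I_n.
Hypothesis correct_i : i \in Corr E.

Definition voted (t : nat) (b : block Tx Hash) : Prop := ownBefore E i t (SVote i b).

Lemma voted_succ t b : voted t.+1 b -> voted t b \/ votes_in i (outs E i t) b.
Proof.
case=> t' [m [+ out inm]]; rewrite ltnS leq_eqVlt => /orP [/eqP eq_t | lt_t].
- by right; exists m; rewrite -eq_t.
- by left; exists t', m.
Qed.

(* A vote signed by i and received from the network was emitted by i before
   it was sent, hence strictly before it was delivered. *)
Lemma Sstart_own_vote t b : Sstart E i t (SVote i b) -> voted t b.
Proof.
have [_ [_ [_ [_ [sync [unforgeable _]]]]]] := exec_E.
case=> [[p [ts [m [sent delivered inm]]]] | //].
have [te [me [le_te out inme]]] := unforgeable _ _ _ _ _ _ sent inm erefl correct_i.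
have /andP [lt_ts _] := sync _ _ _ _ sent.
by exists te, me; split=> //; lia.
Qed.

Lemma voted_vote_inv t : vote_inv (voted t) (st E i t).
Proof.
have [_ [_ [slots _]]] := exec_E.
elim: t => [| t IH]; first by split=> [b | b1 b2] [t' [m [] //]].
apply: vote_inv_sub (slot_vote_inv (@Sstart_own_vote t) (slots i t correct_i) IH).
exact: voted_succ.
Qed.

End Execution.

Theorem lemma1 (n f Delta : nat) (Tx Hash : Type) (H : block Tx Hash -> Hash) (hlam : Hash)
  (E : exec n Tx Hash) :
  5 * f + 1 <= n ->
  is_exec f Delta H hlam E ->
  forall i, i \in Corr E ->
  forall (v : nat), 1 <= v ->
  forall b1 b2 : block Tx Hash, bview b1 = v -> bview b2 = v ->
  (exists t, outs E i t [:: SVote i b1]) ->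
  (exists t, outs E i t [:: SVote i b2]) ->
  b1 = b2.
Proof.
move=> _ exec_E i correct_i v _ b1 b2 view_b1 view_b2 [t1 out1] [t2 out2].
have [_ uniq] := voted_vote_inv exec_E correct_i (maxn t1 t2).+1.
have voted_at t b : t <= maxn t1 t2 -> outs E i t [:: SVote i b] ->
    voted E i (maxn t1 t2).+1 b.
  by move=> le_t out; exists t, [:: SVote i b]; split=> //; left.
apply: uniq; last by rewrite view_b1 view_b2.
- by apply: voted_at out1; rewrite leq_maxl.
- by apply: voted_at out2; rewrite leq_maxr.
Qed.
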